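(* Let $\mathcal{A}$ be a finite list of elements of $\mathbb{Z}^\ell$. The most degenerate constituent $f_{\rho_{\mathcal{A}}}(t)$ of the characteristic quasi-polynomial of $\mathcal{A}$ satisfies $$f_{\rho_{\mathcal{A}}}(t)=\chi^{\mathbb{C}^\times}_{\mathcal{A}}(t)=\chi^{\mathrm{arith}}_{\mathcal{A}}(t).$$
   Context: For a sublist $\mathcal{S}$ (distinguished by index), $r_{\mathcal{S}}$ is the rank of $\langle\mathcal{S}\rangle$; write $(\mathbb{Z}^\ell/\langle\mathcal{S}\rangle)_{\mathrm{tor}}\simeq\bigoplus_i\mathbb{Z}/d_{\mathcal{S},i}\mathbb{Z}$ with $d_{\mathcal{S},i}\mid d_{\mathcal{S},i+1}$, and $\rho_{\mathcal{A}}$ is the lcm over $\mathcal{S}$ of the largest $d_{\mathcal{S},i}$. The function $q\mapsto\#\{x\in(\mathbb{Z}/q\mathbb{Z})^\ell\mid\alpha(x)\neq0\ \forall\alpha\in\mathcal{A}\}$ is a quasi-polynomial with period $\rho_{\mathcal{A}}$ (Kamiya–Takemura–Terao); $f_{\rho_{\mathcal{A}}}(t)$ is the polynomial agreeing with it for all positive $q$ divisible by $\rho_{\mathcal{A}}$. $m(\mathcal{S};G)=\#\mathrm{Hom}((\mathbb{Z}^\ell/\langle\mathcal{S}\rangle)_{\mathrm{tor}},G)$, $\chi^G_{\mathcal{A}}(t)=\sum_{\mathcal{S}\subset\mathcal{A}}(-1)^{\#\mathcal{S}}m(\mathcal{S};G)t^{\ell-r_{\mathcal{S}}}$, and $\chi^{\mathrm{arith}}_{\mathcal{A}}(t)=\sum_{\mathcal{S}\subset\mathcal{A}}(-1)^{\#\mathcal{S}}m(\mathcal{S})t^{\ell-r_{\mathcal{S}}}$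 with $m(\mathcal{S})=\#(\mathbb{Z}^\ell/\langle\mathcal{S}\rangle)_{\mathrm{tor}}$. *)

From HB Require Import structures.
From mathcomp Require Import all_boot all_order all_algebra all_field.
From Stdlib Require Import ClassicalEpsilon.
Set Implicit Arguments. Unset Strict Implicit. Unset Printing Implicit Defensive.
Import Order.TTheory GRing.Theory Num.Theory.
Local Open Scope ring_scope.

(* A sublist S (distinguished by index) is a set I of indices of A.
   M_S is the l x (size A) integer matrix whose i-th column is A_i if i \in I
   and 0 otherwise; its column span is <S>. *)
Definition subMx (l : nat) (A : seq 'rV[int]_l) (I : {set 'I_(size A)}) :
  'M[int]_(l, size A) :=
  \matrix_(j < l, i < size A) (if i \in I then (A`_i) 0 j else 0).

Definition rankS (l : nat) (A : seq 'rV[int]_l) (I : {set 'I_(size A)}) : nat :=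
  \rank (map_mx (intr : int -> rat) (subMx I)).

(* Smith normal form diagonal of an integer matrix (from mathcomp's
   int_Smith_normal_form): M = L * diag(d) * R, L, R unimodular, d_i | d_{i+1}. *)
Definition snf_diag (m n : nat) (M : 'M[int]_(m, n)) : seq int :=
  s2val (projT3 (projT3 (int_Smith_normal_form M))).

(* The invariant factors d_{S,1} | d_{S,2} | ... of the torsion part
   (Z^l/<S>)_tor ~= (+)_i Z/d_{S,i}Z : the nonzero diagonal SNF entries
   (in absolute value; entries equal to 1 contribute trivial summands). *)
Definition torsion_factors (l : nat) (A : seq 'rV[int]_l)
    (I : {set 'I_(size A)}) : seq nat :=
  [seq `|x|%N | x <- take (minn l (size A)) (snf_diag (subMx I)) & x != 0].

Definition mS (l : nat) (A : seq 'rV[int]_l) (I : {set 'I_(size A)}) : nat :=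
  \prod_(d <- torsion_factors I) d.

Definition largest_factor (l : nat) (A : seq 'rV[int]_l)
    (I : {set 'I_(size A)}) : nat :=
  foldr maxn 1 (torsion_factors I).

Definition rhoA (l : nat) (A : seq 'rV[int]_l) : nat :=
  \big[lcmn/1%N]_(I : {set 'I_(size A)}) largest_factor I.

Definition fincard (T : eqType) (P : T -> Prop) : nat :=
  epsilon (inhabits 0%N)
    (fun n => exists s : seq T, [/\ uniq s, (forall x, P x <-> x \in s) & size s = n]).

(* #Hom((+)_i Z/d_i Z, C^x): a homomorphism out of (+)_i Z/d_i Z is the same as
   a choice of images z_i in C^x of the generators with z_i^{d_i} = 1. *)
Definition homCx (d : seq nat) : nat :=
  fincard (fun z : seq algC =>
    size z = size d /\ forall i, (i < size d)%N -> z`_i != 0 /\ z`_i ^+ (nth 0%N d i) = 1).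

Definition mSCx (l : nat) (A : seq 'rV[int]_l) (I : {set 'I_(size A)}) : nat :=
  homCx (torsion_factors I).

Definition chiCx (l : nat) (A : seq 'rV[int]_l) : {poly int} :=
  \sum_(I : {set 'I_(size A)})
     ((-1) ^+ #|I| * (mSCx I)%:R) *: 'X^(l - rankS I).

Definition chiArith (l : nat) (A : seq 'rV[int]_l) : {poly int} :=
  \sum_(I : {set 'I_(size A)})
     ((-1) ^+ #|I| * (mS I)%:R) *: 'X^(l - rankS I).

Definition charQP (l : nat) (A : seq 'rV[int]_l) (q : nat) : nat :=
  #|[set x : {ffun 'I_l -> 'I_q} |
      all (fun a : 'rV[int]_l =>
             ~~ ((q%:Z) %| \sum_(j < l) a 0 j * (x j : nat)%:Z)%Z) A]|.

(* By inclusion-exclusion over the sublists S of A, the number of x in (Z/q)^l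
   avoiding every hyperplane is an alternating sum of the numbers of solutions
   of x M_S = 0 mod q.  Writing M_S = L D R in Smith normal form with L and R
   unimodular, this number is m(S) q^(l - r_S) as soon as every invariant
   factor d_{S,i} divides q, which is the case when rho_A divides q; this is
   the value at q of the S-term of chi^arith_A.  Moreover
   #Hom((+)_i Z/d_i, C^x) = prod_i d_i, since C^x contains exactly d roots of
   unity of order dividing d, so chi^{C^x}_A = chi^arith_A. *)

From HB Require Import structures.
From mathcomp Require Import all_boot all_order all_algebra all_field.
From Stdlib Require Import ClassicalEpsilon.
Set Implicit Arguments. Unset Strict Implicit. Unset Printing Implicit Defensive.
Import Order.TTheory GRing.Theory Num.Theory.
Local Open Scope ring_scope.

Lemma fincardE (T : eqType) (P : T -> Prop) (s : seq T) :
  uniq s -> (forall x, P x <-> x \in s) -> fincard P = size s.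
Proof.
move=> s_uniq Ps; rewrite /fincard.
have ex_s : exists n, exists s0 : seq T,
    [/\ uniq s0, (forall x, P x <-> x \in s0) & size s0 = n] by exists (size s), s.
case: (epsilon_spec (inhabits 0%N) _ ex_s) => s' [s'_uniq Ps' <-].
apply/perm_size/uniq_perm => // x.
by apply/idP/idP => [/Ps'/Ps | /Ps/Ps'].
Qed.

Definition unity_roots (k : nat) : seq algC :=
  if k is k'.+1 then mkseq (GRing.exp (sval (C_prim_root_exists (ltn0Sn k')))) k
  else [::].

Lemma unity_rootsP k : (0 < k)%N ->
  [/\ uniq (unity_roots k), size (unity_roots k) = k
    & forall x, (x \in unity_roots k) = (x ^+ k == 1)].
Proof.
case: k => // k _; rewrite /unity_roots.
case: (C_prim_root_exists (ltn0Sn k)) => z z_prim.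
split; [ | by rewrite size_mkseq | ].
- rewrite map_inj_in_uniq ?iota_uniq // => i j.
  rewrite !mem_iota !add0n => ik jk /eqP.
  by rewrite (eq_prim_root_expr z_prim) !modn_small // => /eqP.
- move=> x; apply/mapP/eqP => [[i _ ->] | /(prim_rootP z_prim) [i ->]].
    by rewrite exprAC (prim_expr_order z_prim) expr1n.
  by exists (val i); rewrite // mem_iota add0n ltn_ord.
Qed.

Definition is_hom_seq (d : seq nat) (z : seq algC) : Prop :=
  size z = size d /\
  forall i, (i < size d)%N -> z`_i != 0 /\ z`_i ^+ (nth 0%N d i) = 1.

Fixpoint hom_seqs (d : seq nat) : seq (seq algC) :=
  if d is k :: d' then [seq x :: z | x <- unity_roots k, z <- hom_seqs d']
  else [:: [::]].

Lemma hom_seqsP d : all (leq 1) d ->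
  [/\ uniq (hom_seqs d), size (hom_seqs d) = \prod_(k <- d) k
    & forall z, is_hom_seq d z <-> z \in hom_seqs d].
Proof.
elim: d => [_ | k d IH /= /andP [k_gt0 /IH [d_uniq d_size d_mem]]].
  split; rewrite ?big_nil // => z; rewrite inE.
  by split=> [[/size0nil ->] | /eqP ->].
have [k_uniq k_size k_mem] := unity_rootsP k_gt0.
split.
- by rewrite allpairs_uniq // => -[a b] [c e] _ _ [-> ->].
- by rewrite size_allpairs k_size d_size big_cons.
case=> [|x z]; first by split=> [[] | /allpairsP [[? ?] [_ _]]].
split=> [[[z_size] z_hom] | /allpairsP [[a b] /= [a_root b_hom [-> ->]]]].
  apply/allpairsP; exists (x, z); split=> //=.
    by rewrite k_mem; case: (z_hom 0%N isT) => _ ->.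
  by apply/d_mem; split=> // i; apply: (z_hom i.+1).
have [b_size b_ok] := (d_mem b).2 b_hom.
split=> [|[_ | i]] /=; [by rewrite b_size | | exact: b_ok].
move: a_root; rewrite k_mem => /eqP ak; split=> //.
apply/eqP=> a0; move: ak; rewrite a0 expr0n gtn_eqF // => /eqP.
by rewrite eq_sym oner_eq0.
Qed.

Lemma homCxE d : all (leq 1) d -> homCx d = \prod_(k <- d) k.
Proof. by case/hom_seqsP=> d_uniq <- d_mem; apply: fincardE. Qed.

Lemma card_set_natz (T : finType) (Q : pred T) :
  (#|[set x | Q x]|%:R : int) = \sum_x (Q x)%:R.
Proof.
rewrite -sum1_card natr_sum big_mkcond /=; apply: eq_bigr => x _.
by rewrite inE; case: (Q x).
Qed.

Lemma prod_nat_of_bool (I : finType) (J : pred I) (a : I -> bool) :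
  \prod_(i in J) ((a i)%:R : int) = ([forall i in J, a i])%:R.
Proof.
have [/forall_inP a_J | /forall_inPn [i iJ /negbTE ai]] := boolP [forall i in J, a i].
  by rewrite big1 // => i /a_J ->.
by rewrite (bigD1 i) //= ai mul0r.
Qed.

(* Expand [\prod_i (1 - [P i x])] and exchange the sums. *)
Lemma inclusion_exclusion (T : finType) (n : nat) (P : 'I_n -> T -> bool) :
  (#|[set x | [forall i, ~~ P i x]]|%:R : int) =
  \sum_(I : {set 'I_n}) (-1) ^+ #|I| * #|[set x | [forall i in I, P i x]]|%:R.
Proof.
rewrite card_set_natz.
under eq_bigr => x _.
  have -> : ([forall i, ~~ P i x])%:R = \prod_i (- ((P i x)%:R : int) + 1).
    rewrite -(prod_nat_of_bool predT (fun i => ~~ P i x)).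
    by apply: eq_bigr => i _; case: (P i x).
  rewrite bigA_distr.
  over.
rewrite exchange_big /=; apply: eq_bigr => I _.
rewrite card_set_natz mulr_sumr; apply: eq_bigr => x _.
by rewrite -big_mkcond /= prodrN prod_nat_of_bool.
Qed.

Definition diag_snf l n (d : seq int) : 'M[int]_(l, n) :=
  \matrix_(i, j) (d`_i *+ (i == j :> nat)).

Lemma snf_diagP l n (M : 'M[int]_(l, n)) : exists L R,
  [/\ L \in unitmx, R \in unitmx, sorted dvdz (snf_diag M)
    & M = L *m diag_snf l n (snf_diag M) *m R].
Proof.
rewrite /snf_diag; case: (int_Smith_normal_form M) => L uL [R uR [d sd dM]] /=.
by exists L, R.
Qed.

Lemma downward_closed_prefix (P : nat -> bool) m :
  (forall i j, (i <= j)%N -> P j -> P i) ->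
  exists2 r, (r <= m)%N & forall i, (i < m)%N -> P i = (i < r)%N.
Proof.
move=> P_down; elim: m => [|m [r r_le IH]]; first by exists 0%N.
have [Pm | nPm] := boolP (P m).
  by exists m.+1 => // i i_lt; rewrite i_lt; apply: P_down Pm.
exists r => [|i]; first exact: leqW.
rewrite ltnS leq_eqVlt => /orP [/eqP -> | /IH //].
by rewrite (negbTE nPm) ltnNge r_le.
Qed.

(* In a divisibility chain, a zero entry forces all later entries to vanish. *)
Lemma sorted_dvdz_support (d : seq int) l n : sorted dvdz d ->
  exists2 r, (r <= minn l n)%N &
    forall i, (i < l)%N -> ((i < n)%N && (d`_i != 0)) = (i < r)%N.
Proof.
move=> d_sorted.
have P_down i j : (i <= j)%N -> (j < n)%N && (d`_j != 0) -> (i < n)%N && (d`_i != 0).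
  move=> ij /andP [jn dj]; rewrite (leq_ltn_trans ij jn) /=.
  have j_size : (j < size d)%N.
    by rewrite ltnNge; apply: contra dj => /(nth_default 0) ->.
  move: ij; rewrite leq_eqVlt => /orP [/eqP -> // | ij].
  have di_dj : (d`_i %| d`_j)%Z.
    by apply: (sorted_ltn_nth dvdz_trans 0 d_sorted) => //; rewrite inE (ltn_trans ij).
  by apply: contraTneq di_dj => ->; rewrite dvd0z.
have [r r_le d_r] := downward_closed_prefix l P_down.
exists r => //; rewrite leq_min r_le /= leqNgt; apply/negP => n_lt_r.
by move: (d_r n (leq_trans n_lt_r r_le)); rewrite n_lt_r ltnn.
Qed.

Lemma map_mx_int_unit (R : comUnitRingType) m (U : 'M[int]_m) :
  U \in unitmx -> map_mx (intr : int -> R) U \in unitmx.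
Proof. by rewrite !unitmxE det_map_mx; apply: rmorph_unit. Qed.

Definition nz_factors l n (d : seq int) : seq nat :=
  [seq `|x|%N | x <- take (minn l n) d & x != 0].

Lemma nz_factors_gt0 l n d : all (leq 1) (nz_factors l n d).
Proof.
apply/allP => k /mapP [x]; rewrite mem_filter => /andP [x_neq0 _] ->.
by rewrite absz_gt0.
Qed.

Lemma sorted_nz_factors l n d : sorted dvdz d -> sorted dvdn (nz_factors l n d).
Proof.
by move=> d_sorted; rewrite sorted_map (sorted_filter dvdz_trans) ?take_sorted.
Qed.

Section SmithDiagonal.
Variables (l n r : nat) (d : seq int).
Hypotheses (r_le : (r <= minn l n)%N)
  (d_support : forall i, (i < l)%N -> ((i < n)%N && (d`_i != 0)) = (i < r)%N).

Lemma r_le_l : (r <= l)%N. Proof. by move: r_le; rewrite leq_min => /andP []. Qed.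
Lemma r_le_n : (r <= n)%N. Proof. by move: r_le; rewrite leq_min => /andP []. Qed.

Lemma snf_entry_neq0 i : (i < r)%N -> d`_i != 0.
Proof.
by move=> ir; have := d_support (leq_trans ir r_le_l); rewrite ir => /andP [].
Qed.

Lemma snf_entry_eq0 i : (i < l)%N -> (r <= i)%N -> (i < n)%N -> d`_i = 0.
Proof.
move=> il ri i_n; apply/eqP.
by have := d_support il; rewrite i_n ltnNge ri => /negbFE.
Qed.

Lemma rank_diag_snf L R : L \in unitmx -> R \in unitmx ->
  \rank (map_mx (intr : int -> rat) (L *m diag_snf l n d *m R)) = r.
Proof.
move=> uL uR; rewrite !map_mxM mxrankMfree ?row_free_unit ?map_mx_int_unit //.
have L_full : row_full (map_mx (intr : int -> rat) L).
  by rewrite row_full_unit map_mx_int_unit.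
rewrite (eqmxMfull _ L_full).
pose c : 'rV[rat]_l := \row_i (if (i < r)%N then (d`_i)%:~R else 1).
have -> : map_mx intr (diag_snf l n d) = diag_mx c *m pid_mx r.
  apply/matrixP => i j; rewrite mul_diag_mx !mxE.
  have [ij | ij] := eqVneq (i : nat) j; last by rewrite mulr0n mulr0.
  rewrite mulr1n /=; case: ltnP => ir; first by rewrite mulr1.
  by rewrite (snf_entry_eq0 (ltn_ord i) ir) ?mulr0 // ij.
have c_full : row_full (diag_mx c).
  rewrite row_full_unit unitmxE det_diag unitfE; apply/prodf_neq0 => i _.
  by rewrite mxE; case: ifP => [/snf_entry_neq0 | _]; rewrite ?intr_eq0 ?oner_neq0.
by rewrite (eqmxMfull _ c_full) rank_pid_mx ?r_le_l ?r_le_n.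
Qed.

Lemma prod_nz_factors :
  (\prod_(k <- nz_factors l n d) k)%N = (\prod_(i < r) absz (d`_i)%R)%N.
Proof.
set K := minn l n.
have d_supportK i : (i < K)%N -> (d`_i != 0) = (i < r)%N.
  by rewrite leq_min => /andP [il iN]; rewrite -d_support // iN.
have r_size : (r <= size d)%N.
  by rewrite leqNgt; apply/negP => /snf_entry_neq0; rewrite nth_default.
rewrite big_map big_filter (big_nth 0) size_take_min big_mkord.
have r_leK : (r <= minn K (size d))%N by rewrite leq_min r_le r_size.
rewrite (big_ord_widen_cond _ xpredT (fun i => absz d`_i) r_leK) /=.
have iK (i : 'I_(minn K (size d))) : (i < K)%N.
  by apply: leq_trans (ltn_ord i) _; rewrite geq_minl.
by apply: eq_big => i; rewrite nth_take ?iK // d_supportK ?iK.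
Qed.

Lemma mem_nz_factors i : (i < r)%N -> absz (d`_i)%R \in nz_factors l n d.
Proof.
move=> ir; have iK : (i < minn l n)%N := leq_trans ir r_le.
have di_neq0 := snf_entry_neq0 ir.
rewrite /nz_factors map_f // mem_filter di_neq0 -(nth_take 0 iK) mem_nth //.
rewrite size_take_min leq_min iK ltnNge; apply: contra di_neq0.
by move/(nth_default 0) ->.
Qed.

End SmithDiagonal.

Lemma sum_dvdn_mul (c e : nat) : (0 < c)%N -> (\sum_(0 <= a < c * e) (c %| a))%N = e.
Proof.
move=> c_gt0; elim: e => [|e IH]; first by rewrite muln0 big_geq.
rewrite mulnS addnC (big_cat_nat _ (leq_addr _ _)) //= IH.
rewrite -{1}(add0n (c * e)%N) big_addn addKn big_ltn // add0n dvdn_mulr //.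
rewrite big1_seq ?addn0 ?addn1 // => a.
rewrite mem_index_iota => /and3P [_ a_gt0 a_lt_c].
rewrite dvdn_addl ?dvdn_mulr //; apply/eqP; rewrite eqb0.
by apply: contraTN a_lt_c => /(dvdn_leq a_gt0); rewrite -leqNgt.
Qed.

Lemma card_multiples N (c e : nat) : (0 < c)%N -> N = (c * e)%N ->
  #|[pred a : 'I_N | (c %| a)%N]| = e.
Proof.
move=> c_gt0 ->; rewrite -[RHS](sum_dvdn_mul e c_gt0) big_mkord -sum1_card.
by rewrite big_mkcond /=; apply: eq_bigr => a _; rewrite inE; case: (c %| a)%N.
Qed.

Lemma mulmx_unitr_eq0 (R : comUnitRingType) m n (A : 'M[R]_(m, n)) U :
  U \in unitmx -> (A *m U == 0) = (A == 0).
Proof.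
move=> uU; apply/eqP/eqP => [AU0 | ->]; last by rewrite mul0mx.
by rewrite -(mulmxK uU A) AU0 mul0mx.
Qed.

Section CountModP.
Variable k : nat.
Local Notation p := k.+2.
Local Notation Zp_mx A := (map_mx (intr : int -> 'Z_p) A).

Definition row_Zp m (x : {ffun 'I_m -> 'I_p}) : 'rV['Z_p]_m := \row_j (x j : 'Z_p).

Lemma row_Zp_inj m : injective (@row_Zp m).
Proof. by move=> x y /rowP xy; apply/ffunP => j; have := xy j; rewrite !mxE. Qed.

Lemma dvdz_Zp (z : int) : ((p%:Z) %| z)%Z = (z%:~R == 0 :> 'Z_p).
Proof.
have dvdn_Zp (m : nat) : (p %| m)%N = (m%:R == 0 :> 'Z_p).
  by rewrite -(inj_eq val_inj) /= val_Zp_nat.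
by case: z => m; rewrite ?NegzE ?rmorphN ?oppr_eq0 dvdzE /= dvdn_Zp.
Qed.

Lemma dvdz_mulmx_Zp m n (M : 'M[int]_(m, n)) (x : {ffun 'I_m -> 'I_p}) i :
  ((p%:Z) %| \sum_(j < m) M j i * (x j : nat)%:Z)%Z = ((row_Zp x *m Zp_mx M) 0 i == 0).
Proof.
rewrite dvdz_Zp rmorph_sum !mxE; congr (_ == 0); apply: eq_bigr => j _.
by rewrite rmorphM /= !mxE mulrC; congr (_ * _); apply: natr_Zp.
Qed.

Lemma forall_dvdz_mulmx_Zp m n (M : 'M[int]_(m, n)) (x : {ffun 'I_m -> 'I_p}) :
  [forall i, ((p%:Z) %| \sum_(j < m) M j i * (x j : nat)%:Z)%Z] =
  (row_Zp x *m Zp_mx M == 0).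
Proof.
apply/forallP/eqP => [x_dvd | xM0 i]; last by rewrite dvdz_mulmx_Zp xM0 mxE.
by apply/rowP => i; rewrite [RHS]mxE; apply/eqP; rewrite -dvdz_mulmx_Zp.
Qed.

Lemma card_kernel_unitl m n (U : 'M['Z_p]_m) (B : 'M['Z_p]_(m, n)) : U \in unitmx ->
  #|[set x | row_Zp x *m U *m B == 0]| = #|[set x | row_Zp x *m B == 0]|.
Proof.
move=> uU; pose f (x : {ffun 'I_m -> 'I_p}) : {ffun 'I_m -> 'I_p} :=
  [ffun j => (row_Zp x *m U) 0 j].
have row_f x : row_Zp (f x) = row_Zp x *m U.
  by apply/rowP => j; rewrite [LHS]mxE ffunE.
have f_inj : injective f.
  move=> x y /(congr1 (@row_Zp _)); rewrite !row_f.
  by move/(can_inj (mulmxK uU))/row_Zp_inj.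
by rewrite -[RHS](card_preimset _ f_inj); apply: eq_card => x; rewrite !inE row_f.
Qed.

(* [a * c = 0] in [Z/p] iff [p %/ |c|] divides [a]. *)
Lemma card_annihilator_Zp (c : int) : c != 0 -> (absz c %| p)%N ->
  #|[pred a : 'Z_p | a * c%:~R == 0]| = absz c.
Proof.
move=> c_neq0 c_dvd; have c_gt0 : (0 < absz c)%N by rewrite absz_gt0.
have pE : p = (p %/ absz c * absz c)%N by rewrite divnK.
have q_gt0 : (0 < p %/ absz c)%N by rewrite divn_gt0 // dvdn_leq.
rewrite -(card_multiples q_gt0 pE); apply: eq_card => a; rewrite !inE.
rewrite -[X in X * _](natr_Zp a) pmulrn -intrM -dvdz_Zp dvdzE abszM /=.
by rewrite {1}pE dvdn_pmul2r.
Qed.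

Variables (l n r : nat) (d : seq int).
Hypotheses (r_le : (r <= minn l n)%N)
  (d_support : forall i, (i < l)%N -> ((i < n)%N && (d`_i != 0)) = (i < r)%N)
  (d_dvd : forall i, (i < r)%N -> (absz (d`_i)%R %| p)%N).

Lemma row_diag_snf_eq0 (x : {ffun 'I_l -> 'I_p}) :
  (row_Zp x *m Zp_mx (diag_snf l n d) == 0) =
  [forall i : 'I_l, (i < r)%N ==> ((x i : 'Z_p) * (d`_i)%:~R == 0)].
Proof.
apply/eqP/forall_inP => [/rowP xD0 i ir | x_ann].
  have i_n : (i < n)%N by apply: leq_trans ir (r_le_n r_le).
  move: (xD0 (Ordinal i_n)); rewrite !mxE (bigD1 i) //= big1 => [|j /negbTE ji].
    by rewrite !mxE eqxx mulr1n addr0 => ->.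
  by rewrite !mxE (inj_eq val_inj) ji mulr0n mulr0.
apply/rowP => j; rewrite !mxE; apply: big1 => i _; rewrite !mxE.
have [ij | _] := eqVneq (i : nat) j; last by rewrite mulr0n mulr0.
have [ir | ri] := ltnP i r; first by rewrite mulr1n; apply/eqP/x_ann.
by rewrite (snf_entry_eq0 d_support) // ?ij // mul0rn mulr0.
Qed.

Lemma card_kernel_diag_snf :
  #|[set x : {ffun 'I_l -> 'I_p} | row_Zp x *m Zp_mx (diag_snf l n d) == 0]|
  = (\prod_(i < r) absz (d`_i)%R * p ^ (l - r))%N.
Proof.
pose Q (i : 'I_l) := [pred a : 'I_p | (i < r)%N ==> ((a : 'Z_p) * (d`_i)%:~R == 0)].
have -> : [set x | row_Zp x *m Zp_mx (diag_snf l n d) == 0] = [set x in family Q].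
  by apply/setP => x; rewrite !inE row_diag_snf_eq0.
rewrite cardsE card_family foldrE big_map big_enum /=.
have card_Q (i : 'I_l) : #|Q i| = if (i < r)%N then absz (d`_i)%R else p.
  case: ltnP => ir.
    rewrite -(card_annihilator_Zp (snf_entry_neq0 r_le d_support ir) (d_dvd ir)).
    by apply: eq_card => a; rewrite !inE ir.
  by rewrite -[RHS]card_ord; apply: eq_card => a; rewrite !inE ltnNge ir.
rewrite (eq_bigr _ (fun i _ => card_Q i)) /=.
rewrite -(big_mkord xpredT (fun i => if (i < r)%N then absz (d`_i)%R else p)).
rewrite (@big_cat_nat _ _ _ r 0 l) ?(r_le_l r_le) //= -prod_nat_const_nat big_mkord.
congr (_ * _)%N; last by apply: eq_big_nat => i /andP [ri _]; rewrite ltnNge ri.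
by apply: eq_bigr => i _; rewrite ltn_ord.
Qed.
End CountModP.

Lemma dvdn_foldr_maxn (s : seq nat) : sorted dvdn s -> all (leq 1) s ->
  {in s, forall x, x %| foldr maxn 1 s}%N.
Proof.
have max_gt0 (t : seq nat) : (0 < foldr maxn 1 t)%N.
  by elim: t => //= c t IH; rewrite leq_max IH orbT.
elim: s => // a s IH a_s_sorted /andP [a_gt0 s_gt0].
have s_sorted := path_sorted a_s_sorted.
case: s IH a_s_sorted s_gt0 s_sorted => [_ _ _ _ | b s IH /andP [ab _] s_gt0 s_sorted].
  by move=> x; rewrite inE => /eqP ->; rewrite /= (maxn_idPl a_gt0).
have s_dvd := IH s_sorted s_gt0.
have a_dvd : (a %| foldr maxn 1 (b :: s))%N by rewrite (dvdn_trans ab) ?s_dvd ?mem_head.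
move=> x; rewrite inE /= (maxn_idPr (dvdn_leq (max_gt0 _) a_dvd)).
by case/orP => [/eqP -> | /s_dvd].
Qed.

Lemma dvdn_largest_factor l (A : seq 'rV[int]_l) (I : {set 'I_(size A)}) :
  {in torsion_factors I, forall x, x %| largest_factor I}%N.
Proof.
have [_ [_ [_ _ d_sorted _]]] := snf_diagP (subMx I).
exact: dvdn_foldr_maxn (sorted_nz_factors _ _ d_sorted) (nz_factors_gt0 _ _ _).
Qed.

Lemma largest_factor_dvd_rhoA l (A : seq 'rV[int]_l) (I : {set 'I_(size A)}) :
  (largest_factor I %| rhoA A)%N.
Proof. by rewrite /rhoA (bigD1 I) //= dvdn_lcml. Qed.

Lemma subMx_dvdz l (A : seq 'rV[int]_l) (I : {set 'I_(size A)}) q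
    (x : {ffun 'I_l -> 'I_q}) :
  [forall i in I, ((q%:Z) %| \sum_(j < l) (A`_i) 0 j * (x j : nat)%:Z)%Z] =
  [forall i, ((q%:Z) %| \sum_(j < l) subMx I j i * (x j : nat)%:Z)%Z].
Proof.
apply: eq_forallb => i; have [iI | iI] /= := boolP (i \in I).
  by congr (_ %| _)%Z; apply: eq_bigr => j _; rewrite mxE iI.
by rewrite big1 ?dvdz0 // => j _; rewrite mxE (negbTE iI) mul0r.
Qed.

Lemma card_solutions_subMx l (A : seq 'rV[int]_l) (I : {set 'I_(size A)}) q :
  (0 < q)%N -> (rhoA A %| q)%N ->
  #|[set x : {ffun 'I_l -> 'I_q} |
     [forall i in I, ((q%:Z) %| \sum_(j < l) (A`_i) 0 j * (x j : nat)%:Z)%Z]]|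
  = (mS I * q ^ (l - rankS I))%N.
Proof.
move=> q_gt0 rho_dvd.
have [L [R [uL uR d_sorted M_snf]]] := snf_diagP (subMx I).
set d := snf_diag (subMx I) in d_sorted M_snf.
have [r r_le d_support] := sorted_dvdz_support l (size A) d_sorted.
have -> : rankS I = r by rewrite /rankS M_snf; apply: rank_diag_snf.
have -> : mS I = (\prod_(i < r) absz (d`_i)%R)%N by apply: prod_nz_factors.
have d_dvd i : (i < r)%N -> (absz (d`_i)%R %| q)%N.
  move=> ir; apply: dvdn_trans (dvdn_trans (largest_factor_dvd_rhoA I) rho_dvd).
  exact: dvdn_largest_factor (mem_nz_factors r_le d_support ir).
(* ['Z_1] is [Z/2], so [q = 1] is treated directly. *)
case: q q_gt0 rho_dvd d_dvd => [|[|k]] // _ _ d_dvd.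
  rewrite big1 => [|i _]; last by apply/eqP; rewrite -dvdn1 d_dvd.
  rewrite (_ : [set x | _] = setT) ?cardsT ?card_ffun ?card_ord ?exp1n //.
  by apply/setP => x; rewrite !inE; apply/forall_inP => i _; apply: dvd1z.
rewrite -(card_kernel_diag_snf r_le d_support d_dvd).
rewrite -(card_kernel_unitl _ (map_mx_int_unit _ uL)).
apply: eq_card => x; rewrite !inE subMx_dvdz forall_dvdz_mulmx_Zp M_snf !map_mxM.
by rewrite !mulmxA mulmx_unitr_eq0 ?map_mx_int_unit.
Qed.

Theorem mainTheorem12 (l : nat) (A : seq 'rV[int]_l) :
  (forall q : nat, (0 < q)%N -> (rhoA A %| q)%N ->
     (charQP A q)%:Z = (chiCx A).[q%:Z])
  /\ chiCx A = chiArith A.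
Proof.
have mSCx_mS (I : {set 'I_(size A)}) : mSCx I = mS I.
  by rewrite /mSCx homCxE //; apply: nz_factors_gt0.
split=> [q q_gt0 rho_dvd | ]; last by apply: eq_bigr => I _; rewrite mSCx_mS.
pose P (i : 'I_(size A)) (x : {ffun 'I_l -> 'I_q}) :=
  ((q%:Z) %| \sum_(j < l) (A`_i) 0 j * (x j : nat)%:Z)%Z.
have -> : charQP A q = #|[set x | [forall i, ~~ P i x]]|.
  apply: eq_card => x; rewrite !inE; apply/(all_nthP 0)/forallP => [x_ok i | x_ok i iA].
    exact: x_ok.
  exact: (x_ok (Ordinal iA)).
rewrite -[LHS]natz (inclusion_exclusion P) /chiCx horner_sum.
apply: eq_bigr => I _.
by rewrite hornerZ hornerXn mSCx_mS card_solutions_subMx // natrM natrX mulrA !natz.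
Qed.
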